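(* Let $X$, $\Sigma$, $A$, $\#$, $X^\#$ and $A'$ be as follows: $X$ and $\Sigma$ are finite alphabets; $A$ is a finite automaton with state set $Q$, start state, final states, and edges labelled by pairs $(y, a)$ with $y \in \{\epsilon\} \cup X \cup \{x^{-1} : x \in X\}$ and $a \in \Sigma \cup \{\epsilon\}$; $\#$ is a new symbol not in $X$ and $X^\# = X \cup \{\#\}$; $A'$ has state set $Q_+ \cup Q_-$ (two disjoint copies $q_+, q_-$ of each $q \in Q$), start state $q_+$ for $q$ the start state of $A$, final states $q_-$ for $q$ final in $A$, an edge $p_+ \to q_+$ labelled $(x\#, a)$ whenever $A$ has an edge $p \to q$ labelled $(x,a)$ with $x \in X$, an edge $p_- \to q_+$ labelled $(x^{-1}\#, a)$ whenever $A$ has an edge $p \to q$ labelled $(x^{-1},a)$ with $x \in X$, an edge $p_+ \to q_+$ labelled $(\epsilon,a)$ whenever $A$ has an edge $p \to q$ labelled $(\epsilon, a)$, an edge $q_+ \to q_-$ labelled $(\epsilon,\epsilon)$ for each $q \in Q$, and a loop at $q_-$ labelled $(\#^{-1},\epsilon)$ for each $q \in Q$. Regard $A$ and $A'$ as ordinary finite automata over the free monoids $\overline{X}^* \times \Sigma^*$ and $(\overline{X^\#})^* \times \Sigma^*$ respectively. Then for $x \in (\overline{X^\#})^*$ and $w \in \Sigma^*$, the automaton $A'$ accepts $(x, w)$ if and only if there exists a word $y \in \overline{X}^*$ such that $x$ is a permissible padding of $y$ and $(y, w)$ is accepted by $A$.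
   Context: For an alphabet $Y$, $\overline{Y} = \{y, y^{-1} : y \in Y\}$, treated as an alphabet of formal symbols; letters of $Y$ are positive generators and letters $y^{-1}$ negative generators. A finite automaton over a monoid $N$ (edges labelled by elements of $N$) accepts an element $n \in N$ if some path from the start state to a final state has label (product of edge labels) $n$. Permissible padding: for $w = w_1 \cdots w_n$ with $w_i \in \overline{X}$, a permissible padding of $w$ is a word $x_1 x_2 \cdots x_n (\#^{-1})^k$ with $k \geq 0$, where $x_i = (\#^{-1})^{m_i} w_i \#$ for some $m_i \geq 0$ if $w_i$ is a negative generator, and $x_i = w_i \#$ if $w_i$ is a positive generator. *)

From mathcomp Require Import all_boot.
From Stdlib Require List.
Set Implicit Arguments. Unset Strict Implicit. Unset Printing Implicit Defensive.

(* Formal symbols of \overline{Y}: y (Pos y) and y^{-1} (Neg y). *)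
Inductive gen (Y : Type) : Type := Pos of Y | Neg of Y.
Arguments Pos {Y} _.
Arguments Neg {Y} _.

(* X^# = X ∪ {#}, realised as option X with None = #. *)
Definition hashsym {X : Type} : option X := None.

Definition ol {T : Type} (o : option T) : seq T :=
  if o is Some t then [:: t] else [::].

(* Paths in a finite automaton over the free monoid Y^* x S^*, whose edges
   (a finite list) are labelled by pairs of words.  [run E p q u v]: there is a
   path from p to q whose label (product of edge labels) is (u, v). *)
Inductive run {Q Y S : Type} (E : seq (Q * seq Y * seq S * Q)) :
    Q -> Q -> seq Y -> seq S -> Prop :=
| run_nil p : run E p p [::] [::]
| run_cons p u a r q u' v' :
    List.In (p, u, a, r) E -> run E r q u' v' -> run E p q (u ++ u') (a ++ v').

Definition accepts {Q Y S : Type} (E : seq (Q * seq Y * seq S * Q))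
  (q0 : Q) (F : Q -> bool) (u : seq Y) (v : seq S) : Prop :=
  exists q, F q /\ run E q0 q u v.

(* The automaton A: edges labelled (y, a), y in {eps} ∪ X ∪ X^{-1}, a in S ∪ {eps}. *)
Definition baseEdge {Q X S : Type} (e : Q * option (gen X) * option S * Q)
  : Q * seq (gen X) * seq S * Q :=
  let: (p, y, a, q) := e in (p, ol y, ol a, q).

Definition baseEdges {Q X S : Type} (E : seq (Q * option (gen X) * option S * Q)) :=
  map baseEdge E.

(* States of A': (true, q) = q_+, (false, q) = q_-. *)
Definition primeEdge {Q X S : Type} (e : Q * option (gen X) * option S * Q)
  : (bool * Q) * seq (gen (option X)) * seq S * (bool * Q) :=
  match e with
  | (p, Some (Pos x), a, q) => ((true, p), [:: Pos (Some x); Pos hashsym], ol a, (true, q))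
  | (p, Some (Neg x), a, q) => ((false, p), [:: Neg (Some x); Pos hashsym], ol a, (true, q))
  | (p, None, a, q) => ((true, p), [::], ol a, (true, q))
  end.

Definition primeEdges {Q : finType} {X S : Type}
  (E : seq (Q * option (gen X) * option S * Q))
  : seq ((bool * Q) * seq (gen (option X)) * seq S * (bool * Q)) :=
  map primeEdge E
  ++ [seq ((true, q), [::], [::], (false, q)) | q <- enum Q]
  ++ [seq ((false, q), [:: Neg hashsym], [::], (false, q)) | q <- enum Q].

Definition primeStart {Q : Type} (q0 : Q) : bool * Q := (true, q0).
Definition primeFinal {Q : Type} (F : Q -> bool) (s : bool * Q) : bool :=
  ~~ s.1 && F s.2.

Definition pad_letter {X : Type} (m : nat) (g : gen X) : seq (gen (option X)) :=
  match g with
  | Pos x => [:: Pos (Some x); Pos hashsym]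
  | Neg x => nseq m (Neg hashsym) ++ [:: Neg (Some x); Pos hashsym]
  end.

Definition permissible_padding {X : Type} (x : seq (gen (option X))) (y : seq (gen X)) : Prop :=
  exists (ms : seq nat) (k : nat),
    size ms = size y /\
    x = flatten [seq pad_letter mw.1 mw.2 | mw <- zip ms y] ++ nseq k (Neg hashsym).

(** A run of A' stays in Q_+ until it takes an edge (eps, eps) into Q_-, where
    it may read any number of #^{-1} before a negative generator returns it to
    Q_+; a positive generator can only be read from Q_+.  Erasing the symbols #
    and #^{-1} therefore maps runs of A' to runs of A, and the erased word is a
    permissible padding: the #^{-1} read in Q_- just before x^{-1} form its
    block (#^{-1})^m, and those read at the end form the tail (#^{-1})^k.
    Conversely every permissible padding of a word accepted by A is read along
    the corresponding run of A' by inserting these detours through Q_-. *)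

From mathcomp Require Import all_boot.
From Stdlib Require List.

Set Implicit Arguments.
Unset Strict Implicit.

Lemma In_of_mem (T : eqType) (x : T) (s : seq T) : x \in s -> List.In x s.
Proof.
elim: s => [|a s IHs] //=; rewrite inE => /orP[/eqP ->|/IHs]; by [left | right].
Qed.

Lemma In_cat (T : Type) (x : T) (s1 s2 : seq T) :
  List.In x (s1 ++ s2) <-> List.In x s1 \/ List.In x s2.
Proof. exact: List.in_app_iff. Qed.

Section Runs.

Variables (Q Y S : Type) (E : seq (Q * seq Y * seq S * Q)).

Lemma run_cat p q r u v u' v' :
  run E p q u v -> run E q r u' v' -> run E p r (u ++ u') (v ++ v').
Proof.
elim=> [//|p0 u0 a0 r0 q0 u1 v1 e _ IH] /IH run_rest.
by rewrite -!catA; apply: run_cons e run_rest.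
Qed.

Lemma run_loop_nseq p a k :
  List.In (p, [:: a], [::], p) E -> run E p p (nseq k a) [::].
Proof.
move=> loop; elim: k => [|k IHk]; first exact: run_nil.
exact: run_cons loop IHk.
Qed.

End Runs.

Section Padding.

Variable X : Type.

Definition pos_headed (y : seq (gen X)) : bool :=
  if y is Pos _ :: _ then true else false.

Lemma padding_nil (u : seq (gen (option X))) :
  permissible_padding u [::] <-> exists k, u = nseq k (Neg hashsym).
Proof.
split=> [[ms [k []]]|[k ->]]; last by exists [::], k.
by case: ms => [_ ->|//]; exists k.
Qed.

Lemma padding_cons (u : seq (gen (option X))) g y :
  permissible_padding u (g :: y) <->
  exists m u', u = pad_letter m g ++ u' /\ permissible_padding u' y.
Proof.
split=> [[[|m ms] [k [//= [size_ms] ->]]]|[m [u' [-> [ms [k [size_ms ->]]]]]]].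
  exists m, (flatten [seq pad_letter mw.1 mw.2 | mw <- zip ms y]
             ++ nseq k (Neg hashsym)).
  by split; [rewrite /= catA | exists ms, k].
by exists (m :: ms), k; rewrite /= size_ms catA.
Qed.

Lemma padding_cons_hash (u : seq (gen (option X))) y :
  ~~ pos_headed y -> permissible_padding u y ->
  permissible_padding (Neg hashsym :: u) y.
Proof.
case: y => [_ /padding_nil[k ->]|[//|x] y _ /padding_cons[m [u' [-> pad_y]]]].
  by apply/padding_nil; exists k.+1.
by apply/padding_cons; exists m.+1, u'.
Qed.

End Padding.

Section Construction.

Variables (X S Q : finType) (E : seq (Q * option (gen X) * option S * Q)).

Lemma primeEdges_base b : List.In b E -> List.In (primeEdge b) (primeEdges E).
Proof. by move=> Eb; apply/In_cat; left; apply: List.in_map. Qed.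

Lemma primeEdges_plus_minus q :
  List.In ((true, q), [::], [::], (false, q)) (primeEdges E).
Proof.
apply/In_cat; right; apply/In_cat; left.
by apply: (List.in_map (fun q => ((true, q), _, _, (false, q)))); apply/In_of_mem/mem_enum.
Qed.

Lemma primeEdges_hash_loop q :
  List.In ((false, q), [:: Neg hashsym], [::], (false, q)) (primeEdges E).
Proof.
apply/In_cat; right; apply/In_cat; right.
by apply: (List.in_map (fun q => ((false, q), _, _, (false, q)))); apply/In_of_mem/mem_enum.
Qed.

Lemma primeEdgesP e : List.In e (primeEdges E) ->
  [\/ exists2 b, List.In b E & e = primeEdge b,
      exists q, e = ((true, q), [::], [::], (false, q)) |
      exists q, e = ((false, q), [:: Neg hashsym], [::], (false, q))].
Proof.
move=> /In_cat[|/In_cat[]] /List.in_map_iff.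
- by case=> b [<- Eb]; constructor 1; exists b.
- by case=> q [<- _]; constructor 2; exists q.
- by case=> q [<- _]; constructor 3; exists q.
Qed.

Lemma run_plus_to_minus q m :
  run (primeEdges E) (true, q) (false, q) (nseq m (Neg hashsym)) [::].
Proof.
by have := run_cons (primeEdges_plus_minus q) (run_loop_nseq m (primeEdges_hash_loop q)).
Qed.

(* The last conjunct holds because only negative generators leave Q_-; it lets
   a #^{-1} read there be absorbed into the padding of the next letter. *)
Lemma run_prime_erase s t u v :
  run (primeEdges E) s t u v ->
  exists y, [/\ permissible_padding u y, run (baseEdges E) s.2 t.2 y v
              & ~~ s.1 -> ~~ pos_headed y].
Proof.
elim=> [p|p u0 a r q u' v' /primeEdgesP e _ IH].
  by exists [::]; split; [apply/padding_nil; exists 0 | apply: run_nil |].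
case: e IH => [[[[[p1 g] a1] q1] Eb]|[q1 [-> -> -> ->]]|[q1 [-> -> -> ->]]].
- have {Eb} base_edge := List.in_map baseEdge _ _ Eb.
  case: g base_edge => [[x|x]|] /= base_edge [-> -> -> ->] [y [pad_y run_y _]];
    have {}run_y := run_cons base_edge run_y.
  + by exists (Pos x :: y); split=> //; apply/padding_cons; exists 0, u'.
  + by exists (Neg x :: y); split=> //; apply/padding_cons; exists 0, u'.
  + by exists y.
- by case=> y [pad_y run_y _]; exists y.
- case=> y [pad_y run_y head_y]; exists y; split=> //.
  exact: padding_cons_hash (head_y _) pad_y.
Qed.

Lemma run_base_padded p q y v u :
  run (baseEdges E) p q y v -> permissible_padding u y ->
  run (primeEdges E) (true, p) (false, q) u v.
Proof.
move=> run_y; elim: run_y u => [{}p|{}p u0 a r {}q y' v' e _ IH] u.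
  by case/padding_nil=> m ->; apply: run_plus_to_minus.
case/List.in_map_iff: e IH => [[[[p1 g] a1] q1] [[<- <- <- <-] Eb]] IH.
have {Eb} prime_edge := primeEdges_base Eb.
case: g prime_edge => [[x|x]|] /= prime_edge.
- by case/padding_cons=> m [u' [-> /IH]]; apply: run_cons prime_edge.
- case/padding_cons=> m [u' [-> /IH run_rest]].
  have := run_cat (run_plus_to_minus p1 m) (run_cons prime_edge run_rest).
  by rewrite -catA.
- by move=> /IH; apply: run_cons prime_edge.
Qed.

End Construction.

Theorem lemma4p5 (X S Q : finType) (q0 : Q) (F : pred Q)
  (E : seq (Q * option (gen X) * option S * Q))
  (x : seq (gen (option X))) (w : seq S) :
  accepts (primeEdges E) (primeStart q0) (primeFinal F) x w <->
  exists y : seq (gen X),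
    permissible_padding x y /\ accepts (baseEdges E) q0 F y w.
Proof.
split=> [[[b qf] [final run_x]]|[y [pad_x [qf [final run_y]]]]].
  have [y [pad_x run_y _]] := run_prime_erase run_x.
  by exists y; split=> //; exists qf; case/andP: final.
exists (false, qf); split; first by rewrite /primeFinal /= final.
exact: run_base_padded run_y pad_x.
Qed.
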